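(* Let $A\in\mathbb{R}^{n\times n}$ be the weighted adjacency matrix of a strongly connected weighted directed graph on $\{1,\ldots,n\}$, let $P=D_{out}^{-1}A$, $Q=D_{in}^{-1}A^T$, let $\beta\in\mathbb{R}$, and for $\ell\ge1$ let $S^{(\ell)}=2^{-\ell}\sum_{|\Psi|=\ell}\Psi(P,Q)\Psi(P,Q)^T$. For $k\ge1$ let $S_k=\sum_{\ell=1}^k\beta^{2\ell-2}S^{(\ell)}$, so that $S_1=\tfrac12(PP^T+QQ^T)$. Then for every $k\ge2$, $$S_k=S_1+\frac{\beta^2}{2}\big(PS_{k-1}P^T+QS_{k-1}Q^T\big).$$
   Context: The graph has node set $\{1,\ldots,n\}$; $A_{ij}>0$ is the weight of the link $i\to j$ and $A_{ij}=0$ if there is no such link; strong connectivity means every node can reach every other node by a directed walk. $D_{out}=\mathrm{Diag}(\sum_j A_{1j},\ldots,\sum_j A_{nj})$ and $D_{in}=\mathrm{Diag}(\sum_j A_{j1},\ldots,\sum_j A_{jn})$. A walk pattern is a nonempty finite sequence $\Psi=\psi_1\cdots\psi_\ell$ with $\psi_k\in\{d,r\}$, $|\Psi|=\ell$; for $M,N\in\mathbb{R}^{n\times n}$, $\Psi(M,N)=X_1\cdots X_\ell$ with $X_k=M$ if $\psi_k=d$, $X_k=N$ if $\psi_k=r$. The sum $\sum_{|\Psi|=\ell}$ runs over all $2^\ell$ patterns of length $\ell$. *)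

From mathcomp Require Import all_boot all_order all_algebra.
Set Implicit Arguments. Unset Strict Implicit. Unset Printing Implicit Defensive.
Import Order.TTheory GRing.Theory Num.Theory.
Local Open Scope ring_scope.

Definition nonneg_mx (R : realFieldType) n (A : 'M[R]_n) := forall i j, 0 <= A i j.

Definition link (R : realFieldType) n (A : 'M[R]_n) : rel 'I_n := fun i j => 0 < A i j.
Definition strongly_connected (R : realFieldType) n (A : 'M[R]_n) :=
  forall i j : 'I_n, connect (link A) i j.

Definition Dout (R : realFieldType) n (A : 'M[R]_n) : 'M[R]_n :=
  diag_mx (\row_i \sum_j A i j).
Definition Din (R : realFieldType) n (A : 'M[R]_n) : 'M[R]_n :=
  diag_mx (\row_i \sum_j A j i).

(* Walk pattern: a sequence over {d, r}, encoded as bool (true = d, false = r).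
   Psi(M, N) = X_1 * ... * X_l. *)
Fixpoint walk_mx (R : realFieldType) n (M N : 'M[R]_n) (Psi : seq bool) : 'M[R]_n :=
  match Psi with
  | [::] => 1%:M
  | b :: Psi' => (if b then M else N) *m walk_mx M N Psi'
  end.

Definition Sl (R : realFieldType) n (P Q : 'M[R]_n) (l : nat) : 'M[R]_n :=
  (2 ^- l) *: \sum_(Psi : l.-tuple bool) (walk_mx P Q Psi *m (walk_mx P Q Psi)^T).

Definition Sk (R : realFieldType) n (P Q : 'M[R]_n) (beta : R) (k : nat) : 'M[R]_n :=
  \sum_(1 <= l < k.+1) (beta ^+ (2 * l - 2)) *: Sl P Q l.

From mathcomp Require Import all_boot all_order all_algebra.
Import Order.TTheory GRing.Theory Num.Theory.
Local Open Scope ring_scope.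

(* The recurrence is purely algebraic and holds for arbitrary matrices P and Q:
   splitting off the first letter of a walk pattern gives
   S^(l+1) = (P S^(l) P^T + Q S^(l) Q^T) / 2, and summing these identities with
   the weights beta^(2l) yields the claim. *)

Lemma sum_tuple_cons (T : finType) (V : nmodType) l (F : l.+1.-tuple T -> V) :
  \sum_(t : l.+1.-tuple T) F t = \sum_(x : T) \sum_(t : l.-tuple T) F [tuple of x :: t].
Proof.
rewrite pair_big /=.
pose cons_tuple (p : T * l.-tuple T) : l.+1.-tuple T := [tuple of p.1 :: p.2].
rewrite (reindex cons_tuple) //=.
exists (fun t : l.+1.-tuple T => (thead t, [tuple of behead t])) => [[x t] _ | t _].
  by congr (_, _); apply: val_inj.
by apply: val_inj; rewrite /= [in RHS](tuple_eta t).
Qed.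

Lemma sum_mul_trmx_mul (R : comPzRingType) (I : finType) m n p
    (X : 'M[R]_(m, n)) (F : I -> 'M[R]_(n, p)) :
  \sum_i (X *m F i) *m (X *m F i)^T = X *m (\sum_i F i *m (F i)^T) *m X^T.
Proof.
rewrite mulmx_sumr mulmx_suml; apply: eq_bigr => i _.
by rewrite trmx_mul !mulmxA.
Qed.

Section WalkSums.

Variables (R : realFieldType) (n : nat) (P Q : 'M[R]_n).

Lemma SlS l : Sl P Q l.+1 = 2^-1 *: (P *m Sl P Q l *m P^T + Q *m Sl P Q l *m Q^T).
Proof.
rewrite /Sl sum_tuple_cons big_bool /= !sum_mul_trmx_mul.
rewrite -!scalemxAr -!scalemxAl -scalerDr scalerA.
by rewrite exprSr invfM mulrC.
Qed.

Lemma Sk1 beta : Sk P Q beta 1 = Sl P Q 1.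
Proof. by rewrite /Sk big_nat1 expr0 scale1r. Qed.

Lemma SkS beta k :
  Sk P Q beta k.+1 =
    Sk P Q beta 1 + (beta ^+ 2 / 2) *: (P *m Sk P Q beta k *m P^T + Q *m Sk P Q beta k *m Q^T).
Proof.
rewrite Sk1 {1}/Sk big_nat_recl // expr0 scale1r; congr (_ + _).
rewrite /Sk -!mulmxA !mulmx_suml !mulmx_sumr -big_split scaler_sumr /=.
apply: eq_big_nat => -[|l] /andP[] // _ _.
rewrite SlS; move: (Sl P Q l.+1) => S.
rewrite -!scalemxAl -!scalemxAr !mulmxA -scalerDr !scalerA; congr (_ *: _).
rewrite mulrAC -exprD; congr (_ ^+ _ * _).
by rewrite mulnS addKn mulnS addKn.
Qed.

End WalkSums.

Theorem lemma2 (R : realFieldType) (n : nat) (A : 'M[R]_n) (beta : R) (k : nat) :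
  nonneg_mx A -> strongly_connected A -> (2 <= k)%N ->
  let P := invmx (Dout A) *m A in
  let Q := invmx (Din A) *m A^T in
  Sk P Q beta k =
    Sk P Q beta 1 + (beta ^+ 2 / 2) *: (P *m Sk P Q beta k.-1 *m P^T + Q *m Sk P Q beta k.-1 *m Q^T).
Proof.
move=> _ _ k_ge2 P Q.
by case: k k_ge2 => [|k] // _; rewrite SkS.
Qed.
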